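(* For every integer $k\ge 2$, the generating function of the number of edges of the $k$-Pell graphs $\Pi_{n,k}$ is $$\sum_{n\geq 0}|E(\Pi_{n,k})|\,t^{n}=\frac{(k-1+t)\,t}{(1-kt-t^{2})^{2}}.$$
   Context: For an integer $k\ge 2$, a $k$-Pell string is a finite word over the alphabet $\{0,1,\ldots,k-1,kk\}$, i.e. a word over $\{0,1,\ldots,k\}$ in which every maximal run of the letter $k$ has even length. For $n\ge 0$, the $k$-Pell graph $\Pi_{n,k}$ has as vertices all $k$-Pell strings of length $n$ (so $\Pi_{0,k}$ is a single vertex, the empty word), and two vertices are adjacent if one is obtained from the other either by replacing a single letter $i$ by $i+1$ (or vice versa) for some $i\in\{0,1,\ldots,k-2\}$, or by replacing one factor $(k-1)(k-1)$ by $kk$ (or vice versa), in such a way that the resulting string is again a $k$-Pell string. *)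

From mathcomp Require Import all_boot all_order all_algebra.
Set Implicit Arguments. Unset Strict Implicit. Unset Printing Implicit Defensive.
Import GRing.Theory.

(* A k-Pell string: a word over {0,...,k} that parses as a word over the
   alphabet {0,1,...,k-1, kk} (equivalently every maximal run of k has even
   length).  Letters are assumed to be <= k (enforced by the vertex type). *)
Fixpoint pellb (k : nat) (s : seq nat) : bool :=
  match s with
  | [::] => true
  | x :: s' =>
      if x == k then
        match s' with
        | y :: s'' => (y == k) && pellb k s''
        | [::] => false
        end
      else pellb k s'
  end.

Section PellGraph.
Variables (k n : nat).

Definition word := n.-tuple 'I_k.+1.

Definition is_pell (u : word) : bool := pellb k (map val u).

Definition letter (u : word) (j : 'I_n) : nat := val (tnth u j).

Definition step_letter (u v : word) : bool :=
  [exists j : 'I_n,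
     [forall l : 'I_n, (l != j) ==> (letter u l == letter v l)]
     && (letter u j < k.-1) && (letter v j == (letter u j).+1)].

Definition step_factor (u v : word) : bool :=
  [exists j : 'I_n, [exists j' : 'I_n,
     (val j' == (val j).+1)
     && [forall l : 'I_n, ((l != j) && (l != j')) ==> (letter u l == letter v l)]
     && (letter u j == k.-1) && (letter u j' == k.-1)
     && (letter v j == k) && (letter v j' == k)]].

Definition pell_adj (u v : word) : bool :=
  [|| step_letter u v, step_letter v u, step_factor u v | step_factor v u].

Definition pell_edges : {set {set word}} :=
  [set e : {set word} | [exists u : word, [exists v : word,
     [&& e == [set u; v], is_pell u, is_pell v & pell_adj u v]]]].

End PellGraph.

From mathcomp Require Import all_boot all_order all_algebra.
From mathcomp Require Import zify ring.
Import GRing.Theory.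

(* Orient every edge of Pi_{n,k} upwards: each edge is exactly one pair (s, t)
   of k-Pell strings where t is obtained from s by raising a letter i < k-1 to
   i+1 or a factor (k-1)(k-1) to kk, since raising increases the letter sum.  Splitting
   such pairs on their first letters, the numbers p_n of k-Pell strings and
   e_n of edges satisfy
     p_(n+2) = k p_(n+1) + p_n,   p_0 = 1, p_1 = k,
     e_(n+2) = k e_(n+1) + e_n + (k-1) p_(n+1) + p_n,   e_0 = 0, e_1 = k-1,
   (e_n counts the pairs with common prefix kk, while (k-1) p_(n+1) and p_n
   count those raised at the first position).  In power series this reads
   (1 - kt - t^2) P = 1 and (1 - kt - t^2) E = (k-1+t) t P, whence
   (1 - kt - t^2)^2 E = (k-1+t) t. *)

Section UpSteps.
Variable k : nat.

Definition raised_head (s t : seq nat) : bool :=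
  match s, t with
  | a :: s', b :: t' => [&& a == k.-1, b == k & s' == t']
  | _, _ => false
  end.

Fixpoint letter_up (s t : seq nat) : bool :=
  match s, t with
  | x :: s', y :: t' =>
      (x == y) && letter_up s' t' || [&& x < k.-1, y == x.+1 & s' == t']
  | _, _ => false
  end.

Fixpoint factor_up (s t : seq nat) : bool :=
  match s, t with
  | x :: s', y :: t' =>
      (x == y) && factor_up s' t' || (x == k.-1) && raised_head s' t' && (y == k)
  | _, _ => false
  end.

Definition up_step (s t : seq nat) : bool := letter_up s t || factor_up s t.

Definition letter_raise (s t : seq nat) : Prop :=
  exists2 j, j < size s &
    [/\ forall l, l != j -> nth 0 s l = nth 0 t l,
        nth 0 s j < k.-1 & nth 0 t j = (nth 0 s j).+1].

Definition factor_raise (s t : seq nat) : Prop :=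
  exists2 j, j.+1 < size s &
    [/\ forall l, l != j -> l != j.+1 -> nth 0 s l = nth 0 t l,
        nth 0 s j = k.-1, nth 0 s j.+1 = k.-1, nth 0 t j = k & nth 0 t j.+1 = k].

Lemma letter_upP s t : size s = size t -> reflect (letter_raise s t) (letter_up s t).
Proof.
elim: s t => [|x s IHs] [|y t] //= => [_|[size_st]]; first by right; case.
apply: (iffP orP) => [[/andP[/eqP<- /(IHs _ size_st)[j lt_js [eq_st lt_j st_j]]]|]|].
- by exists j.+1; last split=> // -[|l] //= /eq_st.
- case/and3P=> lt_x /eqP-> /eqP<-.
  by exists 0; last split=> // -[].
- case=> -[|j] lt_js [eq_st /= lt_j st_j]; [right|left].
  + have -> : s = t by apply: (eq_from_nth size_st) => i _; apply: (eq_st i.+1).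
    by rewrite lt_j st_j !eqxx.
  + have /= -> := eq_st 0 isT; rewrite eqxx /=; apply/IHs => //.
    by exists j => //; split=> // l ne_lj; apply: (eq_st l.+1).
Qed.

Lemma factor_upP s t : size s = size t -> reflect (factor_raise s t) (factor_up s t).
Proof.
elim: s t => [|x s IHs] [|y t] //= => [_|[size_st]]; first by right; case.
apply: (iffP orP) => [[/andP[/eqP<- /(IHs _ size_st)[j lt_js [eq_st sj sj1 tj tj1]]]|]|].
- by exists j.+1 => //; split=> // -[|l] //= ne_lj ne_lj1; apply: eq_st.
- case/andP=> /andP[/eqP-> head_st] /eqP->.
  case: s t size_st head_st {IHs} => [|a s] [|b t] //= _ /and3P[/eqP-> /eqP-> /eqP<-].
  by exists 0 => //; split=> // -[|[]].
- case=> -[|j] lt_js [eq_st /= sj sj1 tj tj1]; [right|left].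
  + rewrite sj tj !eqxx andbT /=.
    case: s t size_st lt_js eq_st sj1 tj1 {IHs} => [|a s] [|b t] //= [size_st] _ eq_st -> ->.
    have -> : s = t by apply: (eq_from_nth size_st) => i _; apply: (eq_st i.+2).
    by rewrite !eqxx.
  + have /= -> := eq_st 0 isT isT; rewrite eqxx /=; apply/IHs => //.
    by exists j => //; split=> // l ne_lj ne_lj1; apply: (eq_st l.+1).
Qed.

Lemma up_step_cons x y s t :
  up_step (x :: s) (y :: t) =
  [|| (x == y) && up_step s t, [&& x < k.-1, y == x.+1 & s == t]
    | (x == k.-1) && raised_head s t && (y == k)].
Proof. by rewrite /up_step /= andb_orr -!orbA; congr orb; rewrite orbCA. Qed.

Lemma sumn_up_step s t : 0 < k -> up_step s t -> sumn s < sumn t.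
Proof.
move=> k_gt0; elim: s t => [|x s IHs] [|y t] //; rewrite up_step_cons /=.
case/or3P=> [/andP[/eqP-> /IHs]|/and3P[_ /eqP-> /eqP->]|/andP[/andP[/eqP-> head_st] /eqP->]].
- by rewrite ltn_add2l.
- by rewrite addSn.
case: s t head_st {IHs} => [|a s] [|b t] //= /and3P[/eqP-> /eqP-> /eqP->]; lia.
Qed.

End UpSteps.

Section PellWords.
Variables (k n : nat).
Implicit Types u v : word k n.

Lemma size_word u : size (map val u) = n.
Proof. by rewrite size_map size_tuple. Qed.

Lemma nth_word u (j : 'I_n) : nth 0 (map val u) j = letter u j.
Proof. by rewrite (nth_map (tnth u j)) ?size_tuple // -tnth_nth. Qed.

Lemma eq_nth_word u v (P : pred nat) :
    (forall l : 'I_n, P l -> letter u l = letter v l) ->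
  forall l, P l -> nth 0 (map val u) l = nth 0 (map val v) l.
Proof.
move=> eq_uv l Pl; have [lt_ln|le_nl] := ltnP l n.
  by rewrite -[l]/(val (Ordinal lt_ln)) !nth_word eq_uv.
by rewrite !nth_default ?size_word.
Qed.

Let size_uv u v : size (map val u) = size (map val v).
Proof. by rewrite !size_word. Qed.

Lemma step_letterE u v : step_letter u v = letter_up k (map val u) (map val v).
Proof.
apply/idP/(@letter_upP k _ _ (size_uv u v)).
- case/existsP=> j /andP[/andP[/forallP eq_uv lt_j] /eqP uv_j].
  exists j; first by rewrite size_word.
  split; rewrite ?nth_word //.
  apply: (@eq_nth_word u v (fun l => l != j)) => l ne_lj.
  by apply/eqP; move: (eq_uv l); rewrite -val_eqE ne_lj.
- case=> j; rewrite size_word => lt_jn [eq_uv lt_j uv_j].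
  apply/existsP; exists (Ordinal lt_jn).
  rewrite -!nth_word /= lt_j uv_j eqxx !andbT.
  by apply/forallP=> l; apply/implyP=> ne_lj; rewrite -!nth_word eq_uv.
Qed.

Lemma step_factorE u v : step_factor u v = factor_up k (map val u) (map val v).
Proof.
apply/idP/(@factor_upP k _ _ (size_uv u v)).
- case/existsP=> j /existsP[j'].
  case/andP=> /andP[/andP[/andP[/andP[/eqP j'E /forallP eq_uv] /eqP uj] /eqP uj'] /eqP vj].
  move=> /eqP vj'.
  exists j; first by rewrite size_word -j'E ltn_ord.
  split; rewrite -?j'E ?nth_word //.
  move=> l ne_lj ne_lj'.
  apply: (@eq_nth_word u v (fun l => (l != j) && (l != j'))); last by apply/andP.
  move=> {}l /andP[{}ne_lj {}ne_lj']; apply/eqP; move: (eq_uv l).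
  by rewrite -!val_eqE ne_lj ne_lj'.
- case=> j; rewrite size_word => lt_j1n [eq_uv uj uj1 vj vj1].
  have lt_jn := ltnW lt_j1n.
  apply/existsP; exists (Ordinal lt_jn); apply/existsP; exists (Ordinal lt_j1n).
  rewrite -!nth_word /= uj uj1 vj vj1 !eqxx !andbT.
  apply/forallP=> l; apply/implyP=> /andP[ne_lj ne_lj1].
  by rewrite -!nth_word eq_uv.
Qed.

Lemma pell_adjE u v :
  pell_adj u v = up_step k (map val u) (map val v) || up_step k (map val v) (map val u).
Proof.
by rewrite /pell_adj /up_step !step_letterE !step_factorE -!orbA; congr orb; rewrite orbCA.
Qed.

End PellWords.

Lemma big_tuple_cons (R : Type) (idx : R) (op : Monoid.com_law idx) (T : finType) n
    (F : n.+1.-tuple T -> R) :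
  \big[op/idx]_(u : n.+1.-tuple T) F u =
  \big[op/idx]_(x : T) \big[op/idx]_(u : n.-tuple T) F (cons_tuple x u).
Proof.
rewrite pair_big /= (reindex (fun p : T * n.-tuple T => cons_tuple p.1 p.2)) //=.
exists (fun u : n.+1.-tuple T => (thead u, behead_tuple u)).
- by move=> [x u] _; congr pair; apply: val_inj.
- by move=> u _; rewrite [in RHS](tuple_eta u); apply: val_inj.
Qed.

Lemma sum_if_eq m c (a : nat) :
  \sum_(y < m) (if y == c :> nat then a else 0) = if c < m then a else 0.
Proof. by rewrite -big_mkcond big_ord1_eq. Qed.

Lemma pellb_cons {k x s} : x != k -> pellb k (x :: s) = pellb k s.
Proof. by move=> /negbTE /= ->. Qed.

Lemma pellb_kcons k y s : pellb k (k :: y :: s) = (y == k) && pellb k s.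
Proof. by rewrite /= eqxx. Qed.

Lemma pellb_lone_k k : pellb k [:: k] = false.
Proof. by rewrite /= eqxx. Qed.

Local Arguments pellb : simpl never.

Section Counting.
Variable k : nat.
Hypothesis k_gt0 : 0 < k.

Let pred_k_neq : k.-1 != k.
Proof. by rewrite ltn_eqF // ltn_predL. Qed.

Definition word_sum n (f : seq nat -> nat) : nat := \sum_(u : word k n) f (map val u).

Definition pair_sum n (g : seq nat -> seq nat -> nat) : nat :=
  word_sum n (fun s => word_sum n (g s)).

Definition pell_count n : nat := word_sum n (pellb k).

Definition up_count n : nat :=
  pair_sum n (fun s t => [&& pellb k s, pellb k t & up_step k s t]).

Lemma card_pell_edges n : #|pell_edges k n| = up_count n.
Proof.
pose A := [set p : word k n * word k n |
  [&& is_pell p.1, is_pell p.2 & up_step k (map val p.1) (map val p.2)]].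
pose edge (p : word k n * word k n) := [set p.1; p.2].
have -> : pell_edges k n = edge @: A.
  apply/setP=> e; rewrite inE; apply/existsP/imsetP.
  - case=> u /existsP[v /and4P[/eqP-> pu pv]]; rewrite pell_adjE.
    case/orP=> [uv|vu]; first by exists (u, v); rewrite // inE pu pv uv.
    by exists (v, u); rewrite ?inE ?pu ?pv // /edge setUC.
  - case=> -[u v]; rewrite inE => /and3P[pu pv uv] ->; exists u; apply/existsP; exists v.
    by rewrite eqxx pu pv pell_adjE uv.
have edge_inj : {in A &, injective edge}.
{ move=> [u v] [u' v']; rewrite !inE /= => /and3P[_ _ uv] /and3P[_ _ uv'].
  move: (@sumn_up_step k _ _ k_gt0 uv) (@sumn_up_step k _ _ k_gt0 uv').
  rewrite /edge /= => + + eq_e.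
  have /set2P[] : u \in [set u'; v'] by rewrite -eq_e set21.
  all: have /set2P[] : v \in [set u'; v'] by rewrite -eq_e set22.
  all: by move=> -> -> //; lia. }
rewrite card_in_imset //.
rewrite /up_count /pair_sum /word_sum pair_big /= -sum1_card big_mkcond /=.
by apply: eq_bigr => -[u v] _; rewrite inE; case: (_ && _).
Qed.

Lemma word_sum0 f : word_sum 0 f = f [::].
Proof.
rewrite /word_sum (eq_bigr (fun=> f [::])) => [|u _]; last by rewrite tuple0.
by rewrite sum_nat_const card_tuple expn0 mul1n.
Qed.

Lemma word_sum_cons n f :
  word_sum n.+1 f = \sum_(x < k.+1) word_sum n (fun s => f ((x : nat) :: s)).
Proof. by rewrite /word_sum big_tuple_cons. Qed.

Lemma eq_word_sum n f g : f =1 g -> word_sum n f = word_sum n g.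
Proof. by move=> fg; apply: eq_bigr => u _. Qed.

Lemma word_sum_head {n c f} :
    c <= k -> (forall x s, x != c -> f (x :: s) = 0) ->
  word_sum n.+1 f = word_sum n (fun s => f (c :: s)).
Proof.
move=> le_ck f0; rewrite word_sum_cons (bigD1 (inord c)) //= inordK ?ltnS //.
rewrite big1 ?addn0 // => x ne_xc; rewrite /word_sum big1 // => u _.
by apply: f0; apply: contraNneq ne_xc => <-; rewrite inord_val.
Qed.

Lemma pair_sum0 g : pair_sum 0 g = g [::] [::].
Proof. by rewrite /pair_sum !word_sum0. Qed.

Lemma pair_sum_cons n g :
  pair_sum n.+1 g =
  \sum_(x < k.+1) \sum_(y < k.+1) pair_sum n (fun s t => g ((x : nat) :: s) ((y : nat) :: t)).
Proof.
rewrite /pair_sum word_sum_cons; apply: eq_bigr => x _.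
under [LHS]eq_bigr do rewrite word_sum_cons.
exact: exchange_big.
Qed.

Lemma eq_pair_sum {n g h} : (forall s t, g s t = h s t) -> pair_sum n g = pair_sum n h.
Proof. by move=> gh; apply: eq_word_sum => s; apply: eq_word_sum. Qed.

Lemma pair_sumD n g h :
  pair_sum n (fun s t => g s t + h s t) = pair_sum n g + pair_sum n h.
Proof.
rewrite /pair_sum /word_sum -big_split; apply: eq_bigr => u _; exact: big_split.
Qed.

Lemma pair_sum_if n (b : bool) g :
  pair_sum n (fun s t => if b then g s t else 0) = if b then pair_sum n g else 0.
Proof. by case: b; rewrite // /pair_sum /word_sum big1 // => u _; rewrite big1. Qed.

Lemma pair_sum_heads {n c d g} :
    c <= k -> d <= k ->
    (forall x y s t, (x != c) || (y != d) -> g (x :: s) (y :: t) = 0) ->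
  pair_sum n.+1 g = pair_sum n (fun s t => g (c :: s) (d :: t)).
Proof.
move=> le_ck le_dk g0; rewrite /pair_sum (word_sum_head le_ck) => [|x s ne_xc].
  by apply: eq_word_sum => s; apply: word_sum_head => // y t ne_yd; rewrite g0 ?ne_yd ?orbT.
by rewrite word_sum_cons big1 // => y _; rewrite /word_sum big1 // => t _; rewrite g0 ?ne_xc.
Qed.

Lemma pair_sum_diag n f : pair_sum n (fun s t => f s && (s == t)) = word_sum n f.
Proof.
apply: eq_bigr => u _; rewrite /word_sum (bigD1 u) //= eqxx andbT big1 ?addn0 // => v ne_vu.
by rewrite (inj_eq (inj_map val_inj)) (inj_eq val_inj) eq_sym (negbTE ne_vu) andbF.
Qed.

Lemma pell_count_succ n :
  pell_count n.+1 = k * pell_count n + word_sum n (fun s => pellb k (k :: s)).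
Proof.
rewrite /pell_count word_sum_cons big_ord_recr /=; congr (_ + _).
rewrite (eq_bigr (fun=> pell_count n)) ?sum_nat_const ?card_ord // => x _.
by apply: eq_word_sum => s; rewrite pellb_cons // neq_ltn ltn_ord.
Qed.

Lemma word_sum_pellb_kcons n : word_sum n.+1 (fun s => pellb k (k :: s)) = pell_count n.
Proof.
rewrite (word_sum_head (leqnn k)) => [|x s /negbTE ne_xk]; last by rewrite pellb_kcons ne_xk.
by apply: eq_word_sum => s; rewrite pellb_kcons eqxx.
Qed.

Lemma pell_count0 : pell_count 0 = 1.
Proof. by rewrite /pell_count word_sum0. Qed.

Lemma pell_count1 : pell_count 1 = k.
Proof. by rewrite pell_count_succ pell_count0 word_sum0 pellb_lone_k muln1 addn0. Qed.

Lemma pell_count_rec n : pell_count n.+2 = k * pell_count n.+1 + pell_count n.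
Proof. by rewrite pell_count_succ word_sum_pellb_kcons. Qed.

Definition kk_up_count n : nat :=
  pair_sum n (fun s t => [&& pellb k (k :: s), pellb k (k :: t) & up_step k s t]).

Definition head_raise_count n : nat :=
  pair_sum n (fun s t => [&& pellb k s, pellb k (k :: t) & raised_head k s t]).

Lemma pell_up_cons x y s t :
  ([&& pellb k (x :: s), pellb k (y :: t) & up_step k (x :: s) (y :: t)] : nat) =
    (if y == x then [&& pellb k (x :: s), pellb k (x :: t) & up_step k s t] : nat else 0)
  + (if y == x.+1 then (if x < k.-1 then pellb k s && (s == t) : nat else 0) else 0)
  + (if y == k then
       (if x == k.-1 then [&& pellb k s, pellb k (k :: t) & raised_head k s t] : nat else 0)
     else 0).
Proof.
rewrite up_step_cons; have [->|ne_yx] := eqVneq y x.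
  rewrite (ltn_eqF (ltnSn x)) /= andbF addn0.
  have [->|_] := eqVneq x k; last by rewrite !andbF !orbF addn0.
  by rewrite eq_sym (negbTE pred_k_neq) /= orbF addn0.
rewrite /= add0n.
have [->|ne_yx1] := eqVneq y x.+1.
  rewrite /=; have [lt_x|ge_x] := ltnP x k.-1.
    have lt_x1 : x.+1 < k by rewrite -ltn_predRL.
    rewrite (ltn_eqF lt_x) (ltn_eqF lt_x1).
    rewrite !pellb_cons ?(ltn_eqF (ltnW lt_x1)) ?(ltn_eqF lt_x1) //.
    by rewrite /= orbF addn0; have [<-|_] := eqVneq s t; rewrite ?andbT ?andbb ?andbF.
  rewrite /= add0n.
  have [ex|ne_x] := eqVneq x k.-1.
    by rewrite ex prednK // eqxx (pellb_cons pred_k_neq) andbT.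
  have /negbTE-> : x.+1 != k by apply: contraNneq ne_x => <-.
  by rewrite !andbF.
rewrite /= add0n; have [ex|_] := eqVneq x k.-1; last first.
  by rewrite !andbF; case: (y == k).
have /negbTE-> : y != k by rewrite -(prednK k_gt0) -ex.
by rewrite !andbF.
Qed.

Lemma up_count_succ n :
  up_count n.+1 = k * up_count n + kk_up_count n + k.-1 * pell_count n + head_raise_count n.
Proof.
pose same_head x :=
  pair_sum n (fun s t => [&& pellb k (x :: s), pellb k (x :: t) & up_step k s t]).
have sum_y (x : 'I_k.+1) :
    \sum_(y < k.+1) pair_sum n (fun s t =>
       [&& pellb k ((x : nat) :: s), pellb k ((y : nat) :: t)
         & up_step k ((x : nat) :: s) ((y : nat) :: t)])
  = same_head x + (if x < k.-1 then pell_count n else 0)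
    + (if x == k.-1 :> nat then head_raise_count n else 0).
  under eq_bigr do
    rewrite (eq_pair_sum (pell_up_cons _ _)) !pair_sumD !pair_sum_if pair_sum_diag.
  rewrite !big_split /= !sum_if_eq ltn_ord ltnSn; congr (_ + _ + _).
  case: (ltnP x k.-1) => [lt_x|_]; last by rewrite if_same.
  by rewrite ltnS (leq_trans lt_x) ?leq_pred.
rewrite /up_count pair_sum_cons (eq_bigr _ (fun x _ => sum_y x)) !big_split /=.
have same_headE : \sum_(x < k.+1) same_head x = k * up_count n + kk_up_count n.
  rewrite big_ord_recr /=; congr (_ + _).
  rewrite (eq_bigr (fun=> up_count n)) ?sum_nat_const ?card_ord // => x _.
  by apply: eq_pair_sum => s t; rewrite !pellb_cons // neq_ltn ltn_ord.
have pellE : \sum_(x < k.+1) (if x < k.-1 then pell_count n else 0) = k.-1 * pell_count n.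
  rewrite -big_mkcond (big_ord_narrow (leq_trans (leq_pred k) (leqnSn k))).
  by rewrite sum_nat_const card_ord.
have headE :
    \sum_(x < k.+1) (if x == k.-1 :> nat then head_raise_count n else 0) = head_raise_count n.
  by rewrite sum_if_eq ltnS leq_pred.
by rewrite same_headE pellE headE.
Qed.

Lemma kk_up_count0 : kk_up_count 0 = 0.
Proof. by rewrite /kk_up_count pair_sum0 pellb_lone_k. Qed.

Lemma head_raise_count0 : head_raise_count 0 = 0.
Proof. by rewrite /head_raise_count pair_sum0 pellb_lone_k andbF. Qed.

Lemma kk_up_count_succ n : kk_up_count n.+1 = up_count n.
Proof.
rewrite /kk_up_count (pair_sum_heads (leqnn k) (leqnn k)) => [|x y s t]; last first.
  by rewrite !pellb_kcons; case/orP=> /negbTE->; rewrite ?andbF.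
apply: eq_pair_sum => s t; rewrite !pellb_kcons up_step_cons !eqxx /=.
by rewrite [k < _]ltnNge leq_pred [k == k.-1]eq_sym (negbTE pred_k_neq) /= !orbF.
Qed.

Lemma head_raise_count_succ n : head_raise_count n.+1 = pell_count n.
Proof.
rewrite /head_raise_count (pair_sum_heads (leq_pred k) (leqnn k)) => [|x y s t]; last first.
  by case/orP=> /negbTE ne; rewrite /= ne ?andbF.
rewrite /pell_count -pair_sum_diag; apply: eq_pair_sum => s t.
rewrite (pellb_cons pred_k_neq) pellb_kcons /= !eqxx /=.
by have [<-|_] := eqVneq s t; rewrite ?andbT ?andbb ?andbF.
Qed.

Lemma up_count0 : up_count 0 = 0.
Proof. by rewrite /up_count pair_sum0. Qed.

Lemma up_count1 : up_count 1 = k.-1.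
Proof.
rewrite up_count_succ up_count0 kk_up_count0 head_raise_count0 pell_count0.
by rewrite muln0 muln1 !addn0.
Qed.

Lemma up_count_rec n :
  up_count n.+2 = k * up_count n.+1 + up_count n + k.-1 * pell_count n.+1 + pell_count n.
Proof. by rewrite up_count_succ kk_up_count_succ head_raise_count_succ. Qed.

End Counting.

Local Open Scope ring_scope.

Section TruncatedSeries.
Context {R : comNzRingType}.
Implicit Types p r : {poly R}.

Definition agree_upto n p r := forall i, (i <= n)%N -> p`_i = r`_i.

Lemma agree_upto_mull q {n p r} : agree_upto n p r -> agree_upto n (q * p) (q * r).
Proof.
move=> pr i le_in; rewrite !coefM; apply: eq_bigr => j _.
by rewrite pr // (leq_trans (leq_subr j i)).
Qed.

Variable K : R.

Lemma agree_upto_recurrence n (a : nat -> R) r :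
    a 0%N = r`_0 -> a 1%N = K * a 0%N + r`_1 ->
    (forall i, (i.+2 <= n)%N -> a i.+2 = K * a i.+1 + a i + r`_i.+2) ->
  agree_upto n ((1 - K%:P * 'X - 'X^2) * \poly_(i < n.+1) a i) r.
Proof.
move=> a0 a1 a_rec i le_in.
rewrite !mulrBl mul1r -mulrA !coefB coefCM coefXM coefXnM !coef_poly ltnS le_in.
case: i le_in => [|[|i]] le_in /=.
- by rewrite mulr0 !subr0.
- by rewrite a1 subr0 addrC addKr.
by rewrite !subSS subn0 !ltnS (ltnW le_in) (ltnW (ltnW le_in)) a_rec //; ring.
Qed.

End TruncatedSeries.

Section PellPolynomials.
Variables (k n : nat).
Hypothesis k_gt0 : (0 < k)%N.

Definition pell_poly : {poly int} := \poly_(i < n.+1) (pell_count k i)%:R.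

Definition up_poly : {poly int} := \poly_(i < n.+1) (up_count k i)%:R.

Lemma pell_poly_inv : agree_upto n ((1 - (k%:R)%:P * 'X - 'X^2) * pell_poly) 1.
Proof.
apply: agree_upto_recurrence => [||i _]; rewrite coef1 /=.
- by rewrite pell_count0.
- by rewrite pell_count1 pell_count0 mulr1 addr0.
- by rewrite pell_count_rec natrD natrM addr0.
Qed.

Lemma up_polyM :
  agree_upto n ((1 - (k%:R)%:P * 'X - 'X^2) * up_poly)
               (((k%:R - 1)%:P + 'X) * 'X * pell_poly).
Proof.
have coef_rhs j : (((k%:R - 1)%:P + 'X) * 'X * pell_poly)`_j =
    (k%:R - 1) * ('X * pell_poly)`_j + ('X * ('X * pell_poly))`_j.
  by rewrite -mulrA mulrDl coefD coefCM.
have pred_kE : (k.-1)%:R = k%:R - 1 :> int by rewrite -subn1 natrB.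
apply: agree_upto_recurrence => [||i le_in]; rewrite coef_rhs !coefXM /= ?coef_poly.
- by rewrite up_count0 mulr0 addr0.
- by rewrite up_count1 // up_count0 pell_count0 mulr0 mulr1 !add0r addr0.
rewrite !ltnS (ltnW le_in) (ltnW (ltnW le_in)) up_count_rec // !natrD !natrM pred_kE.
by rewrite addrA.
Qed.

End PellPolynomials.

Theorem proposition3p1 (k : nat) : (2 <= k)%N ->
  forall n : nat,
    \sum_(i < n.+1)
       ((1 - (k%:R)%:P * 'X - 'X^2) ^+ 2 : {poly int})`_i
         * (#|pell_edges k (n - i)|)%:R
    = (((k%:R - 1)%:P + 'X) * 'X : {poly int})`_n.
Proof.
move=> k_ge2 n; have k_gt0 : (0 < k)%N := ltnW k_ge2.
transitivity (((1 - (k%:R)%:P * 'X - 'X^2) ^+ 2 * up_poly k n)`_n).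
  rewrite coefM; apply: eq_bigr => i _.
  by rewrite coef_poly ltnS leq_subr card_pell_edges.
rewrite expr2 -mulrA (agree_upto_mull _ (@up_polyM k n k_gt0)) // mulrCA.
by rewrite (agree_upto_mull _ (pell_poly_inv k n)) // mulr1.
Qed.
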